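(* Let $E$ be a symmetric operator defined on a dense domain $\mathcal D$ of a Hilbert space $\mathcal H$, and let $I$ be a countable index set. Let $\{d_i\}_{i\in I}$ and $\{\tilde d_i\}_{i\in I}$ be two sequences of real numbers such that: (i) $\{I_j\}_{j\in J}$ is a collection of pairwise disjoint finite subsets of $I$; (ii) $\{d_i\}_{i\in I_j}\preccurlyeq\{\tilde d_i\}_{i\in I_j}$ for each $j\in J$; (iii) $\tilde d_i=d_i$ for all $i\in I\setminus\bigcup_{j\in J}I_j$. Suppose that $\{f_i\}_{i\in I}\subset\mathcal D$ is an orthonormal sequence with $\langle Ef_i,f_i\rangle=\tilde d_i$ for all $i\in I$. Then there exists an orthonormal sequence $\{e_i\}_{i\in I}$ such that each $e_k$ lies in the (algebraic) linear span of $\{f_i\}_{i\in I}$, $\overline{\operatorname{span}}\{e_i\}_{i\in I}=\overline{\operatorname{span}}\{f_i\}_{i\in I}$, and $\langle Ee_i,e_i\rangle=d_i$ for all $i\in I$.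
   Context: $E$ symmetric means $\langle Ef,g\rangle=\langle f,Eg\rangle$ for all $f,g\in\mathcal D$. For finite real sequences $\{a_i\}_{i=1}^N$, $\{b_i\}_{i=1}^N$ with decreasing rearrangements $\{a_i^\downarrow\}$, $\{b_i^\downarrow\}$, the majorization $\{a_i\}\preccurlyeq\{b_i\}$ means $\sum_{i=1}^N a_i^\downarrow=\sum_{i=1}^N b_i^\downarrow$ and $\sum_{i=1}^n a_i^\downarrow\le\sum_{i=1}^n b_i^\downarrow$ for all $1\le n\le N$ (for a finite index set, apply this after any enumeration). $\overline{\operatorname{span}}$ is the closed linear span. *)

From HB Require Import structures.
From mathcomp Require Import all_boot all_order all_algebra.
From mathcomp Require Import finmap.
From mathcomp Require Import reals.
From mathcomp Require Import complex.
Set Implicit Arguments. Unset Strict Implicit. Unset Printing Implicit Defensive.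
Import Order.TTheory GRing.Theory Num.Theory.
Local Open Scope ring_scope.
Local Open Scope complex_scope.

Section Hilbert.
Variables (R : realType) (V : lmodType R[i]) (ip : V -> V -> R[i]).

Definition is_inner_product : Prop :=
  [/\ forall (a : R[i]) (x y z : V), ip (a *: x + y) z = a * ip x z + ip y z,
      forall x y : V, ip y x = (ip x y)^*,
      forall x : V, 0 <= ip x x
    & forall x : V, ip x x = 0 -> x = 0].

Definition hnorm (x : V) : R := Num.sqrt (complex.Re (ip x x)).

Definition hcomplete : Prop :=
  forall u : nat -> V,
    (forall eps : R, 0 < eps -> exists N : nat, forall m n : nat,
        (N <= m)%N -> (N <= n)%N -> hnorm (u m - u n) < eps) ->
    exists l : V, forall eps : R, 0 < eps -> exists N : nat, forall n : nat,
        (N <= n)%N -> hnorm (u n - l) < eps.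

Definition is_hilbert : Prop := is_inner_product /\ hcomplete.

Definition hclosure (A : V -> Prop) (x : V) : Prop :=
  forall eps : R, 0 < eps -> exists y : V, A y /\ hnorm (x - y) < eps.

Definition dense (A : V -> Prop) : Prop := forall x : V, hclosure A x.

Definition is_subspace (A : V -> Prop) : Prop :=
  A 0 /\ forall (a : R[i]) (x y : V), A x -> A y -> A (a *: x + y).

Definition linear_on (D : V -> Prop) (E : V -> V) : Prop :=
  forall (a : R[i]) (x y : V), D x -> D y -> E (a *: x + y) = a *: E x + E y.

Definition symmetric_operator (D : V -> Prop) (E : V -> V) : Prop :=
  [/\ is_subspace D, dense D, linear_on D E
    & forall f g : V, D f -> D g -> ip (E f) g = ip f (E g)].

Definition orthonormal_fam (I : eqType) (f : I -> V) : Prop :=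
  forall i k : I, ip (f i) (f k) = if i == k then 1 else 0.

Definition lspan (I : Type) (f : I -> V) (x : V) : Prop :=
  exists (s : seq I) (c : I -> R[i]), x = \sum_(i <- s) c i *: f i.

Definition cspan (I : Type) (f : I -> V) : V -> Prop := hclosure (lspan f).

End Hilbert.

Definition majorized (R : realDomainType) (a b : seq R) : Prop :=
  let a' := sort >=%R a in let b' := sort >=%R b in
  [/\ size a = size b,
      \sum_(x <- a') x = \sum_(x <- b') x
    & forall n : nat, (1 <= n <= size a)%N ->
        \sum_(x <- take n a') x <= \sum_(x <- take n b') x].

(* Inside one block, d majorized by t is realized one index at a time, as in
   the classical reduction by T-transforms.  Take m with d m maximal, p
   with t p >= d m minimal and q <> p with t q <= d m maximal.  A unitary
   rotation of f p, f q, with a phase chosen to make the off-diagonal entry of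
   E purely imaginary, mixes the diagonal values convexly; so it yields a unit
   vector with diagonal value d m and leaves t p + t q - d m on its partner.
   The remaining values stay majorized, which is checked on the hinge functions
   x |-> (x - c)^+ using that no t j lies strictly between t q and t p.
   Induction on the block size gives an orthonormal basis of the span of the
   block with the prescribed diagonal.  Gluing the blocks, and keeping f i for
   indices outside all blocks, gives e: vectors coming from different blocks
   lie in the spans of disjoint parts of the orthonormal family f. *)

From HB Require Import structures.
From mathcomp Require Import all_boot all_order all_algebra.
From mathcomp Require Import finmap reals complex.
From mathcomp Require Import ring lra.
From Stdlib Require Import ClassicalEpsilon.
Set Implicit Arguments. Unset Strict Implicit. Unset Printing Implicit Defensive.
Import Order.TTheory GRing.Theory Num.Theory.
Local Open Scope complex_scope.
Local Open Scope ring_scope.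

Section PositivePart.
Variable R : realDomainType.
Implicit Types (x c : R).

Definition pospart x := Num.max x 0.

Lemma pospart_ge0 x : 0 <= pospart x.
Proof. by rewrite le_max lexx orbT. Qed.

Lemma pospart_ge x : x <= pospart x.
Proof. by rewrite le_max lexx. Qed.

Lemma pospart_id x : 0 <= x -> pospart x = x.
Proof. exact: max_l. Qed.

Lemma pospart_eq0 x : x <= 0 -> pospart x = 0.
Proof. exact: max_r. Qed.

Section Sums.
Variables (I : eqType) (r : seq I) (u : I -> R).

Lemma sum_if_const (P : pred I) x :
  \sum_(i <- r) (if P i then x else 0) = (count P r)%:R * x.
Proof. by rewrite -big_mkcond big_const_seq iter_addr addr0 mulr_natl. Qed.

Lemma count_le_sum_pospart a c : c <= a ->
  (count (fun i => a <= u i) r)%:R * (a - c) <= \sum_(i <- r) pospart (u i - c).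
Proof.
move=> ca; rewrite -sum_if_const; apply: ler_sum => i _.
case: ifP => [aui|_]; last exact: pospart_ge0.
by rewrite pospart_id; lra.
Qed.

Lemma sum_pospart_le_count M c : (forall i, i \in r -> u i <= M) ->
  \sum_(i <- r) pospart (u i - c) <= (count (fun i => c < u i) r)%:R * (M - c).
Proof.
move=> uM; rewrite -sum_if_const big_seq [X in _ <= X]big_seq; apply: ler_sum => i ir.
have := uM i ir; case: ifP => [cu|/negbT]; first by rewrite pospart_id; lra.
by rewrite -leNgt => uc; rewrite pospart_eq0; lra.
Qed.

Lemma sum_pospart_shift c c' : c' <= c ->
  \sum_(i <- r) pospart (u i - c) + (count (fun i => c < u i) r)%:R * (c - c')
  <= \sum_(i <- r) pospart (u i - c').
Proof.
move=> c'c; rewrite -sum_if_const -big_split; apply: ler_sum => i _ /=.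
case: ifP => [cu|/negbT]; first by rewrite !pospart_id; lra.
rewrite -leNgt addr0 => uc; rewrite pospart_eq0; [exact: pospart_ge0 | lra].
Qed.

Lemma sum_pospart_gap a b c : b <= c <= a ->
  (forall i, i \in r -> a <= u i \/ u i <= b) ->
  \sum_(i <- r) pospart (u i - b)
  = \sum_(i <- r) pospart (u i - c) + (count (fun i => a <= u i) r)%:R * (c - b).
Proof.
case/andP=> bc ca gap; rewrite -sum_if_const -big_split !big_seq.
apply: eq_bigr => i ir /=; case: ifP => [aui|/negbT]; first by rewrite !pospart_id; lra.
rewrite -ltNge => uia; have [|ub] := gap i ir; first lra.
by rewrite !pospart_eq0 ?addr0; lra.
Qed.

End Sums.

Lemma sum_pospart_residual (I : eqType) (r r' : seq I) (u v : I -> R) dm tm tq c :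
  (forall i, i \in r -> u i <= dm) ->
  (forall j, j \in r' -> tm <= v j \/ v j <= tq) -> tq < c < dm -> dm <= tm ->
  dm - tq + \sum_(i <- r) pospart (u i - tq)
    <= tm - tq + \sum_(j <- r') pospart (v j - tq) ->
  \sum_(i <- r) pospart (u i - c)
    <= pospart (tm + tq - dm - c) + \sum_(j <- r') pospart (v j - c).
Proof.
(* No v j lies in (tq, tm), so on [tq, c] the right-hand sum is affine with
   slope -h, while the left-hand one decreases at rate at least K; compare K
   with h. *)
move=> u_max gap /andP[tqc cdm] dmtm at_tq.
set K := count (fun i => c < u i) r; set h := count (fun j => tm <= v j) r'.
have F1 := count_le_sum_pospart r' v (ltW (lt_le_trans cdm dmtm)).
have tq_c_tm : tq <= c <= tm by rewrite !ltW // (lt_le_trans cdm dmtm).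
have F2 := sum_pospart_gap tq_c_tm gap.
have F3 := sum_pospart_le_count c u_max.
have F4 := sum_pospart_shift r u (ltW tqc).
rewrite -/K -/h in F1 F2 F3 F4.
have := pospart_ge0 (tm + tq - dm - c); have := pospart_ge (tm + tq - dm - c).
have [Kh | hK] := leqP K h.
  have : K%:R * (dm - c) <= h%:R * (tm - c).
    by apply: ler_pM; rewrite ?ler0n ?ler_nat ?lerD2r ?subr_ge0 // ltW.
  lra.
have : h.+1%:R * (c - tq) <= K%:R * (c - tq).
  by apply: ler_wpM2r; rewrite ?ler_nat ?subr_ge0 // ltW.
rewrite -addn1 natrD mulrDl mul1r; lra.
Qed.

End PositivePart.

Section Transposition.
Variable I : eqType.

Definition transp (m p i : I) := if i == m then p else if i == p then m else i.

Lemma transpK m p : involutive (transp m p).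
Proof.
rewrite /transp => i; have [-> | im] := eqVneq i m; first by rewrite eqxx; case: eqVneq.
by have [-> | ip] := eqVneq i p; rewrite ?eqxx // (negbTE im) (negbTE ip).
Qed.

Lemma transp_id m p i : i != m -> i != p -> transp m p i = i.
Proof. by rewrite /transp => /negbTE-> /negbTE->. Qed.

Lemma transpL m p : transp m p m = p.
Proof. by rewrite /transp eqxx. Qed.

Lemma transpR m p : transp m p p = m.
Proof. by rewrite /transp eqxx; case: eqVneq. Qed.

Lemma transp_mem (s : seq I) m p i :
  m \in s -> p \in s -> (transp m p i \in s) = (i \in s).
Proof.
move=> ms ps; rewrite /transp.
by case: eqVneq => [->|_]; last case: eqVneq => [->|_]; rewrite ?ms ?ps.
Qed.

Lemma transp_perm s m p : uniq s -> m \in s -> p \in s ->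
  perm_eq [seq transp m p i | i <- s] s.
Proof.
move=> us ms ps; have inj := can_inj (transpK m p).
apply: uniq_perm; rewrite ?(map_inj_uniq inj) // => i.
by rewrite -{1}(transpK m p i) (mem_map inj) transp_mem.
Qed.

End Transposition.

Section Majorization.
Variables (R : realDomainType) (I : eqType).
Implicit Types (s : seq I) (d t : I -> R).

(* Majorization in Hardy-Littlewood-Polya form, tested on the hinge functions
   x |-> (x - c)^+; unlike [majorized] it ignores the order of the indices. *)
Definition majorized_on s d t :=
  \sum_(i <- s) d i = \sum_(i <- s) t i /\
  forall c : R, \sum_(i <- s) pospart (d i - c) <= \sum_(i <- s) pospart (t i - c).

Lemma majorized_on_perm s d t (sigma : I -> I) :
  perm_eq [seq sigma i | i <- s] s -> majorized_on s d t -> majorized_on s d (t \o sigma).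
Proof.
move=> ps [sum_dt pos_dt].
have reindex (F : I -> R) : \sum_(i <- s) F (sigma i) = \sum_(i <- s) F i.
  by rewrite -[RHS](perm_big _ ps) big_map.
by split=> [|c]; [rewrite (reindex t) | rewrite (reindex (fun i => pospart (t i - c)))].
Qed.

Lemma argmax_seq s (F : I -> R) : s != [::] ->
  exists2 x, x \in s & forall y, y \in s -> F y <= F x.
Proof.
elim: s => [//|a [|b s] IH] _.
  by exists a; rewrite ?mem_head // => y; rewrite inE => /eqP->.
have [x xs Hx] := IH isT; have [ax | xa] := leP (F a) (F x).
  by exists x => [|y]; rewrite inE ?xs ?orbT // => /orP[/eqP-> | /Hx].
exists a => [|y]; first exact: mem_head.
by rewrite inE => /orP[/eqP-> // | /Hx/le_trans]; apply; apply: ltW.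
Qed.

Lemma argmax_cond s (P : pred I) (F : I -> R) : has P s ->
  exists x, [/\ x \in s, P x & forall y, y \in s -> P y -> F y <= F x].
Proof.
rewrite has_filter => /(argmax_seq F)[x]; rewrite mem_filter => /andP[Px xs] Hx.
by exists x; split=> // y ys Py; apply: Hx; rewrite mem_filter Py.
Qed.

Lemma argmin_cond s (P : pred I) (F : I -> R) : has P s ->
  exists x, [/\ x \in s, P x & forall y, y \in s -> P y -> F x <= F y].
Proof.
move=> /(argmax_cond (fun i => - F i))[x [xs Px Hx]].
by exists x; split=> // y ys Py; rewrite -lerN2 Hx.
Qed.

Lemma majorized_on_above s d t m : majorized_on s d t -> m \in s ->
  has (fun p => d m <= t p) s.
Proof.
move=> [_ pos_dt] ms; have [|p ps tp_max] := argmax_seq t (s := s).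
  by apply: contraTneq ms => ->.
apply/hasP; exists p => //; rewrite leNgt; apply/negP => tp_lt.
have := pos_dt (t p); rewrite [X in _ <= X]big1_seq; last first.
  by move=> i /andP[_ iS]; rewrite pospart_eq0 // subr_le0 tp_max.
rewrite (big_rem m) //= pospart_id; last by rewrite subr_ge0 ltW.
have : 0 <= \sum_(i <- rem m s) pospart (d i - t p).
  by apply: sumr_ge0 => i _; apply: pospart_ge0.
by move=> S0; rewrite leNgt => /negP; apply; apply: ltr_wpDr S0 _; rewrite subr_gt0.
Qed.

Lemma majorized_on_below s d t m p : majorized_on s d t -> uniq s ->
  (forall i, i \in s -> d i <= d m) -> p \in s -> d m <= t p -> (1 < size s)%N ->
  has (fun q => (q != p) && (t q <= d m)) s.
Proof.
move=> [sum_dt _] us d_max ps dtp s2; apply/negPn/negP => /hasPn above.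
have rem_lt : \sum_(i <- rem p s) d i < \sum_(i <- rem p s) t i.
  rewrite big_seq [X in _ < X]big_seq; apply: ltr_sum => [|i].
    have : size (rem p s) != 0%N by rewrite size_rem // -(subnK s2) addn2.
    by case: (rem p s) => // i r _; apply/hasP; exists i; rewrite mem_head.
  rewrite mem_rem_uniq // => /andP[/= ip iS]; apply: le_lt_trans (d_max i iS) _.
  by have := above i iS; rewrite ip /= -ltNge.
move: sum_dt; rewrite (big_rem p) // [in RHS](big_rem p) //= => /eqP.
by rewrite lt_eqF // ler_ltD // (le_trans (d_max p ps) dtp).
Qed.

Lemma majorized_on_residual s d t m q : uniq s -> m \in s -> q \in s -> m != q ->
  majorized_on s d t -> (forall i, i \in s -> d i <= d m) -> t q <= d m <= t m ->
  (forall j, j \in s -> j != m -> j != q -> t m <= t j \/ t j <= t q) ->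
  majorized_on (rem m s) d (fun j => if j == q then t m + t q - d m else t j).
Proof.
move=> us ms qs mq [sum_dt pos_dt] d_max /andP[tq dm] gap.
set x := t m + t q - d m; set s1 := rem m s; set s2 := rem q s1.
have us1 : uniq s1 by apply: rem_uniq.
have q_s1 : q \in s1 by rewrite mem_rem_uniq // inE eq_sym mq.
have split_m (F : I -> R) : \sum_(i <- s) F i = F m + \sum_(i <- s1) F i.
  by rewrite (big_rem m).
have split_q (F : I -> R) : \sum_(i <- s1) F i = F q + \sum_(i <- s2) F i.
  by rewrite (big_rem q).
have sum_t' (F : R -> R) :
    \sum_(j <- s1) F (if j == q then x else t j) = F x + \sum_(j <- s2) F (t j).
  rewrite split_q eqxx; congr (_ + _); apply: eq_big_seq => j.
  by rewrite mem_rem_uniq // inE => /andP[/negbTE-> _].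
split=> [|c].
  by move: sum_dt; rewrite (sum_t' id) split_m (split_m t) !split_q /x; lra.
rewrite (sum_t' (fun y => pospart (y - c))).
have in_s i : i \in s1 -> i \in s by apply: mem_rem.
have maj_at c' : pospart (d m - c') + \sum_(i <- s1) pospart (d i - c') <=
    pospart (t m - c') + (pospart (t q - c') + \sum_(j <- s2) pospart (t j - c')).
  have := pos_dt c'; rewrite split_m (split_m (fun i => pospart (t i - c'))).
  by rewrite (split_q (fun i => pospart (t i - c'))).
have [dm_c | c_dm] := leP (d m) c.
  rewrite big1_seq => [|i /andP[_ /in_s/d_max di]]; last by rewrite pospart_eq0 //; lra.
  by rewrite addr_ge0 ?pospart_ge0 // sumr_ge0 // => i _; apply: pospart_ge0.
have [c_tq | tq_c] := leP c (t q).
  have := maj_at c; rewrite (pospart_id (x := d m - c)) ?(pospart_id (x := t m - c))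
    ?(pospart_id (x := t q - c)); try lra.
  by have := pospart_ge (x - c); rewrite /x; lra.
rewrite /x; apply: (sum_pospart_residual (dm := d m)) => [i /in_s/d_max // | j | | // |].
- rewrite mem_rem_uniq // inE => /andP[jq /[dup] /in_s js].
  by rewrite mem_rem_uniq // inE => /andP[jm _]; apply: gap.
- by rewrite tq_c c_dm.
- have := maj_at (t q); rewrite subrr (pospart_eq0 (lexx 0)) add0r.
  rewrite (pospart_id (x := d m - t q)) ?(pospart_id (x := t m - t q)) // subr_ge0 //.
  exact: le_trans dm.
Qed.

Lemma majorized_on_pivots s d t : uniq s -> (1 < size s)%N -> majorized_on s d t ->
  exists m p q, [/\ [&& m \in s, p \in s, q \in s & q != p],
    forall i, i \in s -> d i <= d m, t q <= d m <= t p
  & forall j, j \in s -> j != p -> j != q -> t p <= t j \/ t j <= t q].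
Proof.
move=> us s2 maj.
have [|m ms d_max] := argmax_seq d (s := s); first by case: s s2 {us maj}.
have [p [ps dp p_min]] := argmin_cond t (majorized_on_above maj ms).
have [q [qs /andP[qp tq] q_max]] :=
  argmax_cond t (majorized_on_below maj us d_max ps dp s2).
exists m, p, q; split; rewrite ?ms ?ps ?qs ?qp ?tq ?dp //.
move=> j js jp jq; have [dj | jd] := leP (d m) (t j); first by left; apply: p_min.
by right; apply: q_max; rewrite // jp ltW.
Qed.

(* The transposition (m p) moves the pivot p to the slot m where the value
   d m is produced. *)
Lemma majorized_on_step s d t : uniq s -> (1 < size s)%N -> majorized_on s d t ->
  exists m p q, let q' := transp m p q in
  [/\ [&& m \in s, p \in s & q \in s], q' != m, t q <= d m <= t p
  & majorized_on (rem m s) d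
      (fun j => if j == q' then t p + t q - d m else t (transp m p j))].
Proof.
move=> us s2 maj; have [m [p [q [/and4P[ms ps qs qp] d_max tq_dm_tp gap]]]] :=
  majorized_on_pivots us s2 maj.
set q' := transp m p q; have q'm : q' != m.
  by apply: contra qp => /eqP q'm; rewrite -(transpK m p q) -/q' q'm transpL.
have q's : q' \in s by rewrite transp_mem.
have mq' : m != q' by rewrite eq_sym.
have maj' := majorized_on_perm (transp_perm us ms ps) maj.
exists m, p, q; split; rewrite ?ms ?ps ?qs //.
have := majorized_on_residual us ms q's mq' maj' d_max; rewrite /= transpL transpK.
apply=> // j js jm jq'; apply: gap; rewrite ?transp_mem //.
  by apply: contra jm => /eqP jp; rewrite -(transpK m p j) jp transpR.
by apply: contra jq' => /eqP jq; rewrite -(transpK m p j) jq.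
Qed.

Lemma sum_pospart_sorted (l : seq R) c : sorted >=%R l ->
  \sum_(x <- l) pospart (x - c) = \sum_(x <- take (count (fun x => c < x) l) l) (x - c).
Proof.
elim: l => [|a l IH] /=; first by rewrite !big_nil.
rewrite (path_sortedE ge_trans) => /andP[/allP l_le_a sorted_l].
have [ca | ac] := ltP c a.
  by rewrite !big_cons IH // pospart_id // subr_ge0 ltW.
have -> : count (fun x => c < x) l = 0%N.
  apply/eqP; rewrite -leqn0 leqNgt -has_count; apply/hasPn => y /l_le_a ya.
  by rewrite -leNgt (le_trans ya).
rewrite big_nil big_cons big1_seq ?addr0 => [|y /andP[_ /l_le_a ya]]; apply: pospart_eq0;
  by rewrite subr_le0 // (le_trans ya).
Qed.

Lemma majorized_on_map s d t :
  majorized [seq d i | i <- s] [seq t i | i <- s] -> majorized_on s d t.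
Proof.
rewrite /majorized; set a := sort _ _; set b := sort _ _ => -[_ sum_ab pre_ab].
have sum_sort (F : R -> R) u :
    \sum_(x <- sort >=%R [seq u i | i <- s]) F x = \sum_(i <- s) F (u i).
  by rewrite (perm_big _ (permEl (perm_sort _ _))) big_map.
split=> [|c]; first by rewrite -(sum_sort id d) -(sum_sort id t).
rewrite -(sum_sort (fun x => pospart (x - c)) d) -(sum_sort (fun x => pospart (x - c)) t).
rewrite sum_pospart_sorted ?sort_sorted //; last by move=> x y; apply: le_total.
rewrite -/a -/b; set k := count _ a.
have size_b : size b = size a by rewrite !size_sort !size_map.
have k_a : (k <= size a)%N by apply: count_size.
have sum_sub (l : seq R) : \sum_(x <- l) (x - c) = \sum_(x <- l) x - (size l)%:R * c.
  by rewrite sumrB big_const_seq count_predT iter_addr addr0 mulr_natl.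
have take_le : \sum_(x <- take k b) (x - c) <= \sum_(x <- b) pospart (x - c).
  rewrite -{2}(cat_take_drop k b) big_cat /= -[X in X <= _]addr0.
  apply: lerD; first by apply: ler_sum => x _; apply: pospart_ge.
  by apply: sumr_ge0 => x _; apply: pospart_ge0.
have k_b : (k <= size b)%N by rewrite size_b.
apply: le_trans take_le; rewrite !sum_sub !size_takel // lerD2r.
case: k k_a k_b => [|k] k_a _; first by rewrite !take0 !big_nil.
by apply: pre_ab; rewrite size_map -(size_map d) -(size_sort >=%R).
Qed.

Lemma majorized_on_small s d t : (size s <= 1)%N -> majorized_on s d t ->
  {in s, d =1 t}.
Proof.
case: s => [|a [|b s]] //= _ [sum_dt _] i; rewrite inE => /eqP->.
by move: sum_dt; rewrite !big_seq1.
Qed.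

End Majorization.

Lemma convex_comb_between (R : realFieldType) (a b x : R) : b <= x <= a ->
  exists2 tau, 0 <= tau <= 1 & x = tau * a + (1 - tau) * b.
Proof.
case/andP=> bx xa; have [ab | ab] := eqVneq a b.
  exists 1; rewrite ?lexx ?ler01 // subrr mul0r addr0 mul1r.
  by apply/eqP; rewrite eq_le xa ab bx.
have ba : 0 < a - b by rewrite subr_gt0 lt_neqAle eq_sym ab (le_trans bx xa).
exists ((x - b) / (a - b)).
  by rewrite divr_ge0 ?subr_ge0 ?(le_trans bx xa) //= ler_pdivrMr // mul1r lerD2r.
by field; rewrite subr_eq0.
Qed.



Section LinearSpanOn.
Variables (K : pzRingType) (V : lmodType K) (I : eqType).
Implicit Types (s : seq I) (g h : I -> V).

Definition lspan_on s g (x : V) : Prop :=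
  exists c : I -> K, x = \sum_(i <- s) c i *: g i.

Lemma lspan_on0 s g : lspan_on s g 0.
Proof. by exists (fun=> 0); rewrite big1 // => i _; rewrite scale0r. Qed.

Lemma lspan_onDZ s g a x y :
  lspan_on s g x -> lspan_on s g y -> lspan_on s g (a *: x + y).
Proof.
move=> [c ->] [c' ->]; exists (fun i => a * c i + c' i).
rewrite scaler_sumr -big_split; apply: eq_bigr => i _.
by rewrite scalerDl scalerA.
Qed.

Lemma lspan_onZ s g a x : lspan_on s g x -> lspan_on s g (a *: x).
Proof.
by move=> sx; rewrite -[_ *: x]addr0; apply: lspan_onDZ => //; apply: lspan_on0.
Qed.

Lemma lspan_on_self s g k : uniq s -> k \in s -> lspan_on s g (g k).
Proof.
move=> us ks; exists (fun i => (i == k)%:R).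
rewrite (big_rem k) //= eqxx scale1r big1_seq ?addr0 // => i /andP[_].
by rewrite mem_rem_uniq // => /andP[/negbTE-> _]; rewrite scale0r.
Qed.

Lemma lspan_on_trans s s' g h x :
  (forall k, k \in s' -> lspan_on s g (h k)) -> lspan_on s' h x -> lspan_on s g x.
Proof.
move=> sh [c ->]; elim: s' sh => [|k s' IH] sh.
  by rewrite big_nil; apply: lspan_on0.
rewrite big_cons; apply: lspan_onDZ; first by apply: sh; rewrite mem_head.
by apply: IH => i iS'; apply: sh; rewrite inE iS' orbT.
Qed.

Lemma eq_lspan_on s g h x : {in s, g =1 h} -> lspan_on s g x -> lspan_on s h x.
Proof. by move=> gh [c ->]; exists c; apply: eq_big_seq => i /gh ->. Qed.

Lemma lspan_on_undup s g x : lspan_on s g x -> lspan_on (undup s) g x.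
Proof.
move=> [c ->]; exists (fun i => c i *+ count_mem i s).
rewrite -big_undup_iterop_count; apply: eq_bigr => i _.
by rewrite Monoid.iteropE iter_addr addr0 scalerMnl.
Qed.

Lemma lspan_on_sub s s' g x : uniq s -> uniq s' -> {subset s <= s'} ->
  lspan_on s g x -> lspan_on s' g x.
Proof.
move=> us us' ss' [c ->]; exists (fun i => if i \in s then c i else 0).
have fs' : perm_eq [seq i <- s' | i \in s] s.
  apply: uniq_perm; rewrite ?filter_uniq // => i.
  by rewrite mem_filter andb_idr //; apply: ss'.
rewrite -(perm_big _ fs') big_filter big_mkcond; apply: eq_bigr => i _.
by case: ifP; rewrite ?scale0r.
Qed.

Lemma scale_comb2 (x y p q p' q' : K) (u v : V) :
  x *: (p *: u + q *: v) + y *: (p' *: u + q' *: v) =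
  (x * p + y * p') *: u + (x * q + y * q') *: v.
Proof. by rewrite !scalerDr !scalerA addrACA -!scalerDl. Qed.

Definition basis_change_on s g h :=
  (forall i, i \notin s -> h i = g i) /\
  (forall i, i \in s -> lspan_on s g (h i) /\ lspan_on s h (g i)).

Lemma basis_change_on_refl s g : uniq s -> basis_change_on s g g.
Proof. by move=> us; split=> // i iS; split; apply: lspan_on_self. Qed.

Lemma basis_change_on_trans s g1 g2 g3 :
  basis_change_on s g1 g2 -> basis_change_on s g2 g3 -> basis_change_on s g1 g3.
Proof.
move=> [out12 sp12] [out23 sp23]; split=> [i iS|i iS].
  by rewrite out23 // out12.
split; first by apply: lspan_on_trans (proj1 (sp23 i iS)) => k /sp12[].
by apply: lspan_on_trans (proj2 (sp12 i iS)) => k /sp23[].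
Qed.

Lemma basis_change_on_sub s s' g h : uniq s -> uniq s' -> {subset s <= s'} ->
  basis_change_on s g h -> basis_change_on s' g h.
Proof.
move=> us us' ss' [out sp]; split=> [i iS'|i iS'].
  by apply: out; apply: contra iS'; apply: ss'.
have [iS|nis] := boolP (i \in s).
  by have [gh hg] := sp i iS; split; [apply: lspan_on_sub gh | apply: lspan_on_sub hg].
by split; [rewrite out | rewrite -out] => //; apply: lspan_on_self.
Qed.

Lemma basis_change_on_transp s g m p : uniq s -> m \in s -> p \in s ->
  basis_change_on s g (g \o transp m p).
Proof.
move=> us ms ps; split=> [i iS | i iS] /=.
  by rewrite transp_id //; apply: contraNneq iS => ->.
split; first by apply: lspan_on_self; rewrite ?transp_mem.
by rewrite -{1}(transpK m p i); apply: (lspan_on_self (g \o _)); rewrite ?transp_mem.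
Qed.

End LinearSpanOn.

Section LinearSpan.
Variables (R : realType) (V : lmodType R[i]) (I : eqType).
Implicit Types (g h : I -> V).

Lemma lspanDZ g a x y : lspan g x -> lspan g y -> lspan g (a *: x + y).
Proof.
move=> [s sx] [s' sy]; exists (undup (s ++ s')).
have widen r z : {subset r <= s ++ s'} -> lspan_on r g z ->
    lspan_on (undup (s ++ s')) g z.
  move=> rs /lspan_on_undup; apply: lspan_on_sub; rewrite ?undup_uniq // => i.
  by rewrite !mem_undup; apply: rs.
by apply: lspan_onDZ; [apply: widen sx | apply: widen sy] => i;
  rewrite mem_cat => ->; rewrite ?orbT.
Qed.

Lemma lspan_trans g h x : (forall k, lspan g (h k)) -> lspan h x -> lspan g x.
Proof.
move=> gh [s [c ->]]; elim: s => [|k s IH]; last by rewrite big_cons; apply: lspanDZ.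
by rewrite big_nil; exists [::]; apply: lspan_on0.
Qed.

Lemma cspan_trans (ip : V -> V -> R[i]) g h x :
  (forall k, lspan g (h k)) -> cspan ip h x -> cspan ip g x.
Proof.
move=> gh hx eps eps0; have [y [hy xy]] := hx eps eps0.
by exists y; split => //; apply: lspan_trans hy.
Qed.

End LinearSpan.

Section InnerProduct.
Variables (R : realType) (V : lmodType R[i]) (ip : V -> V -> R[i]).
Hypothesis Hip : is_inner_product ip.

Lemma ipC x y : ip y x = (ip x y)^*.
Proof. by case: Hip. Qed.

Lemma ipDZl a x y z : ip (a *: x + y) z = a * ip x z + ip y z.
Proof. by case: Hip. Qed.

Lemma ip0l z : ip 0 z = 0.
Proof.
have := ipDZl 1 0 0 z; rewrite scale1r addr0 mul1r => /eqP.
by rewrite -subr_eq subrr eq_sym => /eqP.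
Qed.

Lemma ipZl a x z : ip (a *: x) z = a * ip x z.
Proof. by rewrite -[a *: x]addr0 ipDZl ip0l addr0. Qed.

Lemma ipDl x y z : ip (x + y) z = ip x z + ip y z.
Proof. by rewrite -{1}[x]scale1r ipDZl mul1r. Qed.

Lemma ipZr a x z : ip z (a *: x) = a^* * ip z x.
Proof. by rewrite ipC ipZl rmorphM /= -ipC. Qed.

Lemma ipDr x y z : ip z (x + y) = ip z x + ip z y.
Proof. by rewrite ipC ipDl rmorphD /= -!ipC. Qed.

Lemma ip_suml (T : Type) (s : seq T) (F : T -> V) z :
  ip (\sum_(i <- s) F i) z = \sum_(i <- s) ip (F i) z.
Proof. by elim: s => [|a s IH]; rewrite ?big_nil ?ip0l // !big_cons ipDl IH. Qed.

Lemma ip_sumr (T : Type) (s : seq T) (F : T -> V) z :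
  ip z (\sum_(i <- s) F i) = \sum_(i <- s) ip z (F i).
Proof. by rewrite ipC ip_suml rmorph_sum; apply: eq_bigr => i _; rewrite [RHS]ipC. Qed.

Lemma lspan_on_orthogonal (I : eqType) (f : I -> V) (s s' : seq I) x y :
  orthonormal_fam ip f -> (forall k, k \in s -> k \notin s') ->
  lspan_on s f x -> lspan_on s' f y -> ip x y = 0.
Proof.
move=> Hf disj [c ->] [c' ->]; rewrite ip_suml big1_seq // => k /andP[_ ks].
rewrite ipZl ip_sumr big1_seq ?mulr0 // => k' /andP[_ k's].
rewrite ipZr Hf; case: eqP => [kk'|]; last by rewrite mulr0.
by move: (disj k ks); rewrite kk' k's.
Qed.

End InnerProduct.

Section LinearOn.
Variables (R : realType) (V : lmodType R[i]) (D : V -> Prop) (E : V -> V).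
Hypotheses (HD : is_subspace D) (HE : linear_on D E).

Lemma subspace0 : D 0. Proof. by case: HD. Qed.

Lemma subspaceDZ a x y : D x -> D y -> D (a *: x + y).
Proof. by case: HD => _; apply. Qed.

Lemma subspaceZ a x : D x -> D (a *: x).
Proof. by move=> Dx; rewrite -[_ *: x]addr0; apply: subspaceDZ Dx subspace0. Qed.

Lemma subspaceD x y : D x -> D y -> D (x + y).
Proof. by move=> Dx; rewrite -[x]scale1r; apply: subspaceDZ. Qed.

Lemma linear_on0 : E 0 = 0.
Proof.
have := HE 1 subspace0 subspace0; rewrite scaler0 add0r scale1r => /eqP.
by rewrite -subr_eq subrr eq_sym => /eqP.
Qed.

Lemma linear_onZ a x : D x -> E (a *: x) = a *: E x.
Proof.
by move=> Dx; rewrite -[_ *: x]addr0 HE ?linear_on0 ?addr0 //; apply: subspace0.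
Qed.

Lemma linear_onD x y : D x -> D y -> E (x + y) = E x + E y.
Proof. by move=> Dx Dy; rewrite -{1}[x]scale1r HE // scale1r. Qed.

End LinearOn.

Lemma phase_exists (C : numClosedFieldType) (z : C) :
  exists w : C, w * w^* = 1 /\ w * z + (w * z)^* = 0.
Proof.
have [-> | z0] := eqVneq z 0; first by exists 1; rewrite conjC1 mulr1 mulr0 conjC0 addr0.
have nz0 : `|z| != 0 by rewrite normr_eq0.
exists ('i * z^* / `|z|); split.
  rewrite -normCK !normrM normfV normCi norm_conjC mul1r normr_id mulfV //.
  by rewrite expr1n.
have -> : 'i * z^* / `|z| * z = 'i * `|z|.
  by rewrite mulrAC -(mulrA _ _ z) [_^* * z]mulrC -normCK expr2 mulrA mulfK.
by rewrite rmorphM /= conjCi conj_normC mulNr addrN.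
Qed.

Section Rotation.
Variables (R : realType) (V : lmodType R[i]) (ip : V -> V -> R[i]).
Hypothesis Hip : is_inner_product ip.
Variables (D : V -> Prop) (E : V -> V).
Hypotheses (HD : is_subspace D) (HE : linear_on D E)
  (HEsym : forall x y, D x -> D y -> ip (E x) y = ip x (E y)).
Variables (I : eqType) (g : I -> V) (a b : I).
Hypotheses (Hg : orthonormal_fam ip g) (HgD : forall i, D (g i)) (ab : a != b).

Lemma domain_comb2 x y : D (x *: g a + y *: g b).
Proof. by apply: (subspaceD HD); apply: (subspaceZ HD). Qed.

Lemma ip_comb2 x y x' y' :
  ip (x *: g a + y *: g b) (x' *: g a + y' *: g b) = x * x'^* + y * y'^*.
Proof.
rewrite !(ipDl Hip, ipDr Hip, ipZl Hip, ipZr Hip) !Hg !eqxx.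
by rewrite (negbTE ab) eq_sym (negbTE ab); ring.
Qed.

Lemma ipE_comb2 x y : let z := ip (E (g b)) (g a) in
  ip (E (x *: g a + y *: g b)) (x *: g a + y *: g b) =
  x * x^* * ip (E (g a)) (g a) + y * y^* * ip (E (g b)) (g b)
  + (x^* * y * z + (x^* * y * z)^*).
Proof.
have DZ u v : D (u *: g v) by apply: (subspaceZ HD).
rewrite /= (linear_onD HE (DZ x a) (DZ y b)) !(linear_onZ HD HE) //.
rewrite !(ipDl Hip, ipDr Hip, ipZl Hip, ipZr Hip).
have -> : ip (E (g a)) (g b) = (ip (E (g b)) (g a))^*.
  by rewrite HEsym // -(ipC Hip).
by rewrite !rmorphM /= conjCK; ring.
Qed.

Lemma ip_comb2_orth x y k : k != a -> k != b ->
  ip (x *: g a + y *: g b) (g k) = 0 /\ ip (g k) (x *: g a + y *: g b) = 0.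
Proof.
move=> ka kb; have o : ip (x *: g a + y *: g b) (g k) = 0.
  rewrite (ipDl Hip) !(ipZl Hip) !Hg ![_ == k]eq_sym (negbTE ka) (negbTE kb).
  by rewrite !mulr0 addr0.
by split; rewrite // (ipC Hip) o conjC0.
Qed.

Section Rot.
Variables (c s w : R[i]).
Hypotheses (cR : c^* = c) (sR : s^* = s) (cs1 : c * c + s * s = 1) (w1 : w * w^* = 1).

(* The unitary [[c, s w], [-s, c w]] acting on g a, g b, with c, s real; when
   w makes w <E g b, g a> purely imaginary, the new diagonal entries of E are
   the convex mixtures c^2 x + s^2 y and s^2 x + c^2 y of the old ones x, y. *)
Definition rot i :=
  if i == a then c *: g a + (s * w) *: g b
  else if i == b then - s *: g a + (c * w) *: g b else g i.

Lemma rotE i : i != a -> i != b -> rot i = g i.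
Proof. by rewrite /rot => /negbTE-> /negbTE->. Qed.

Lemma rota : rot a = c *: g a + (s * w) *: g b.
Proof. by rewrite /rot eqxx. Qed.

Lemma rotb : rot b = - s *: g a + (c * w) *: g b.
Proof. by rewrite /rot eq_sym (negbTE ab) eqxx. Qed.

Lemma rot_orthonormal : orthonormal_fam ip rot.
Proof.
have [Naa Nbb Nab] : [/\ ip (rot a) (rot a) = 1, ip (rot b) (rot b) = 1
                      & ip (rot a) (rot b) = 0].
  have ww u v : u * w * (v * w^*) = u * v by rewrite mulrACA w1 mulr1.
  rewrite rota rotb !ip_comb2 !rmorphM !rmorphN /= cR sR !ww -cs1.
  by split; ring.
have Nba : ip (rot b) (rot a) = 0 by rewrite (ipC Hip) Nab conjC0.
have rot_comb i : (i == a) || (i == b) -> exists x y, rot i = x *: g a + y *: g b.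
  by case/orP => /eqP->; [rewrite rota | rewrite rotb]; do 2 eexists.
move=> i k.
have [iab | /norP[ia ib]] := boolP ((i == a) || (i == b));
  have [kab | /norP[ka kb]] := boolP ((k == a) || (k == b)).
- have ba : (b == a) = false by rewrite eq_sym (negbTE ab).
  by case/orP: iab => /eqP->; case/orP: kab => /eqP->; rewrite ?eqxx ?ba ?(negbTE ab).
- have [x [y ->]] := rot_comb i iab; rewrite rotE //.
  have [-> _] := ip_comb2_orth x y ka kb.
  by case: (eqVneq i k) iab => // ->; rewrite (negbTE ka) (negbTE kb).
- have [x [y ->]] := rot_comb k kab; rewrite rotE //.
  have [_ ->] := ip_comb2_orth x y ia ib.
  by case: (eqVneq i k) kab => // <-; rewrite (negbTE ia) (negbTE ib).
- by rewrite !rotE // Hg.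
Qed.

Lemma rot_basis_change (r : seq I) : uniq r -> a \in r -> b \in r ->
  basis_change_on r g rot.
Proof.
move=> ur ar br; split=> [i ir | i ir].
  by rewrite rotE //; apply: contraNneq ir => ->.
have comb h x y : lspan_on r h (x *: h a + y *: h b).
  by apply: lspan_onDZ; last apply: lspan_onZ; apply: lspan_on_self.
have ga : g a = c *: rot a + (- s) *: rot b.
  rewrite rota rotb scale_comb2.
  have -> : c * c + - s * - s = 1 by rewrite -cs1; ring.
  have -> : c * (s * w) + - s * (c * w) = 0 by ring.
  by rewrite scale1r scale0r addr0.
have gb : g b = (w^* * s) *: rot a + (w^* * c) *: rot b.
  rewrite rota rotb scale_comb2.
  have -> : w^* * s * c + w^* * c * - s = 0 by ring.
  have -> : w^* * s * (s * w) + w^* * c * (c * w) = 1.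
    by rewrite -cs1 -[RHS]mulr1 -w1; ring.
  by rewrite scale1r scale0r add0r.
have [iab | /norP[ia ib]] := boolP ((i == a) || (i == b)); last first.
  by split; [rewrite rotE | rewrite -rotE] => //; apply: lspan_on_self.
by case/orP: iab => /eqP->; split; [rewrite rota | rewrite ga | rewrite rotb | rewrite gb];
  apply: comb.
Qed.

Lemma rot_value_a : w * ip (E (g b)) (g a) + (w * ip (E (g b)) (g a))^* = 0 ->
  ip (E (rot a)) (rot a) = c * c * ip (E (g a)) (g a) + s * s * ip (E (g b)) (g b).
Proof.
move=> wz; rewrite rota ipE_comb2 !rmorphM /= conjCK cR sR.
set z := ip (E (g b)) (g a) in wz *.
transitivity (c * c * ip (E (g a)) (g a) + s * s * (w * w^*) * ip (E (g b)) (g b)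
              + c * s * (w * z + (w * z)^*)); first by rewrite rmorphM; ring.
by rewrite wz w1 mulr0 addr0 mulr1.
Qed.

Lemma rot_value_b : w * ip (E (g b)) (g a) + (w * ip (E (g b)) (g a))^* = 0 ->
  ip (E (rot b)) (rot b) = s * s * ip (E (g a)) (g a) + c * c * ip (E (g b)) (g b).
Proof.
move=> wz; rewrite rotb ipE_comb2 !rmorphM !rmorphN /= conjCK cR sR.
set z := ip (E (g b)) (g a) in wz *.
transitivity (s * s * ip (E (g a)) (g a) + c * c * (w * w^*) * ip (E (g b)) (g b)
              - s * c * (w * z + (w * z)^*)); first by rewrite rmorphM; ring.
by rewrite wz w1 mulr0 subr0 mulr1.
Qed.

Lemma rot_D i : D (rot i).
Proof.
rewrite /rot; case: ifP => _; first exact: domain_comb2.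
by case: ifP => _; [apply: domain_comb2 | apply: HgD].
Qed.

End Rot.

Lemma rotate_pair (tau : R) : 0 <= tau <= 1 ->
  exists g' : I -> V, [/\ orthonormal_fam ip g', forall i, D (g' i),
    forall r, uniq r -> a \in r -> b \in r -> basis_change_on r g g',
    ip (E (g' a)) (g' a)
      = tau%:C * ip (E (g a)) (g a) + (1 - tau)%:C * ip (E (g b)) (g b)
  & ip (E (g' b)) (g' b)
      = (1 - tau)%:C * ip (E (g a)) (g a) + tau%:C * ip (E (g b)) (g b)].
Proof.
case/andP=> tau0 tau1; have [w [w1 wz]] := phase_exists (ip (E (g b)) (g a)).
have sqrtK (x : R) : 0 <= x -> (Num.sqrt x)%:C * (Num.sqrt x)%:C = x%:C.
  by move=> x0; rewrite -rmorphM -expr2 sqr_sqrtr.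
have sqrt_real (x : R) : ((Num.sqrt x)%:C)^* = (Num.sqrt x)%:C by exact: conjc_real.
have cs1 : (Num.sqrt tau)%:C * (Num.sqrt tau)%:C
           + (Num.sqrt (1 - tau))%:C * (Num.sqrt (1 - tau))%:C = 1.
  by rewrite !sqrtK ?subr_ge0 // -rmorphD addrC subrK.
exists (rot (Num.sqrt tau)%:C (Num.sqrt (1 - tau))%:C w); split.
- exact: rot_orthonormal (sqrt_real tau) (sqrt_real (1 - tau)) cs1 w1.
- exact: rot_D.
- by move=> r; apply: rot_basis_change.
- by rewrite rot_value_a // !sqrtK ?subr_ge0.
- by rewrite rot_value_b // !sqrtK ?subr_ge0.
Qed.

End Rotation.

Lemma orthonormal_comp (R : realType) (V : lmodType R[i]) (ip : V -> V -> R[i])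
  (I : eqType) (g : I -> V) (sigma : I -> I) :
  injective sigma -> orthonormal_fam ip g -> orthonormal_fam ip (g \o sigma).
Proof. by move=> inj Hg i k; rewrite /= Hg (inj_eq inj). Qed.

Section Diagonal.
Variables (R : realType) (V : lmodType R[i]) (ip : V -> V -> R[i]).
Hypothesis Hip : is_inner_product ip.
Variables (D : V -> Prop) (E : V -> V).
Hypotheses (HD : is_subspace D) (HE : linear_on D E)
  (HEsym : forall x y, D x -> D y -> ip (E x) y = ip x (E y)).
Variable I : eqType.
Implicit Types (s : seq I) (g : I -> V) (d t : I -> R).

Lemma diagonal_step s g t d : uniq s -> (1 < size s)%N ->
  orthonormal_fam ip g -> (forall i, D (g i)) ->
  (forall i, i \in s -> ip (E (g i)) (g i) = (t i)%:C) -> majorized_on s d t ->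
  exists m g' t', [/\ m \in s, basis_change_on s g g',
    orthonormal_fam ip g' /\ (forall i, D (g' i)), ip (E (g' m)) (g' m) = (d m)%:C
  & (forall i, i \in rem m s -> ip (E (g' i)) (g' i) = (t' i)%:C)
    /\ majorized_on (rem m s) d t'].
Proof.
move=> us s2 Hg HgD Ht maj; have [m [p [q]]] := majorized_on_step us s2 maj.
set sigma := transp m p; set q' := sigma q.
move=> [/and3P[ms ps qs] q'm /andP[tq tp] maj'].
have q's : q' \in s by rewrite transp_mem.
have mq' : m != q' by rewrite eq_sym.
have [tau tau01 dm_eq] := convex_comb_between (introT andP (conj tq tp)).
have Hg1 := orthonormal_comp (can_inj (transpK m p)) Hg.
have Ht1 i : i \in s -> ip (E ((g \o sigma) i)) ((g \o sigma) i) = (t (sigma i))%:C.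
  by move=> iS; rewrite /= Ht ?transp_mem.
have [g' [Hg' Hg'D bc val_m val_q']] :=
  rotate_pair Hip HD HE HEsym Hg1 (fun i => HgD (sigma i)) mq' tau01.
exists m, g', (fun j => if j == q' then t p + t q - d m else t (sigma j)); split=> //.
- exact: basis_change_on_trans (basis_change_on_transp g us ms ps) (bc s us ms q's).
- by rewrite val_m !Ht1 // /q' /sigma transpK transpL -!rmorphM -rmorphD dm_eq.
split=> // i; rewrite mem_rem_uniq // inE => /andP[im iS].
have [-> | iq'] := eqVneq i q'.
  rewrite val_q' !Ht1 // /q' /sigma transpK transpL -!rmorphM -rmorphD dm_eq.
  by congr (_%:C); ring.
have [out _] : basis_change_on [:: m; q'] (g \o sigma) g'.
  by apply: bc; rewrite ?mem_head ?inE ?eqxx ?orbT //= inE andbT.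
by rewrite out ?Ht1 // !inE negb_or im.
Qed.

Lemma diagonal_majorized s g t d : uniq s ->
  orthonormal_fam ip g -> (forall i, D (g i)) ->
  (forall i, i \in s -> ip (E (g i)) (g i) = (t i)%:C) -> majorized_on s d t ->
  exists h, [/\ basis_change_on s g h, orthonormal_fam ip h, forall i, D (h i)
  & forall i, i \in s -> ip (E (h i)) (h i) = (d i)%:C].
Proof.
have [n] := ubnP (size s); elim: n s g t => // n IH s g t /ltnSE size_s us Hg HgD Ht maj.
have [small | s2] := leqP (size s) 1.
  exists g; split=> //; first exact: basis_change_on_refl.
  by move=> i iS; rewrite Ht // (majorized_on_small small maj iS).
have [m [g' [t' [ms bc [Hg' Hg'D] val_m [Ht' maj']]]]] :=
  diagonal_step us s2 Hg HgD Ht maj.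
have size_rem : (size (rem m s) < n)%N.
  by rewrite size_rem // -ltnS (ltn_predK s2); apply: leq_trans size_s.
have [h [bc' Hh HhD Hval]] := IH _ _ _ size_rem (rem_uniq m us) Hg' Hg'D Ht' maj'.
exists h; split=> //.
  apply: basis_change_on_trans bc (basis_change_on_sub (rem_uniq m us) us _ bc').
  exact: mem_rem.
move=> i iS; have [-> | im] := eqVneq i m.
  by rewrite (proj1 bc') // mem_rem_uniqF.
by apply: Hval; rewrite mem_rem_uniq // inE im.
Qed.

End Diagonal.

Lemma partial_fun_of_rel (I J : Type) (P : I -> J -> Prop) :
  (forall i j k, P i j -> P i k -> j = k) ->
  exists blk : I -> option J, forall i j, blk i = Some j <-> P i j.
Proof.
move=> Pfun; apply: (choice (fun i o => forall j, o = Some j <-> P i j)) => i.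
have [[j Pij] | noP] := classic (exists j, P i j).
  by exists (Some j) => k; split=> [[<-] // | /(Pfun _ _ _ Pij)->].
by exists None => j; split=> // Pij; case: noP; exists j.
Qed.

Section Gluing.
Variables (R : realType) (V : lmodType R[i]) (ip : V -> V -> R[i]).
Hypothesis Hip : is_inner_product ip.
Variables (I : eqType) (J : Type) (S : J -> seq I) (blk : I -> option J).
Hypothesis blkP : forall i j, blk i = Some j <-> i \in S j.
Variables (f : I -> V) (h : J -> I -> V).
Hypotheses (Hf : orthonormal_fam ip f) (Hh : forall j, orthonormal_fam ip (h j))
  (bc : forall j, basis_change_on (S j) f (h j)).

Definition glue i := if blk i is Some j then h j i else f i.

Definition glue_support i := if blk i is Some j then S j else [:: i].

Lemma glue_support_blk i k : k \in glue_support i -> blk k = blk i.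
Proof.
rewrite /glue_support; case Ei: (blk i) => [j | ]; first by move/blkP.
by rewrite inE => /eqP->.
Qed.

Lemma glue_lspan_on i : lspan_on (glue_support i) f (glue i).
Proof.
rewrite /glue /glue_support; case Ei: (blk i) => [j | ].
  by apply: (proj1 ((bc j).2 i _)); apply/blkP.
by apply: lspan_on_self; rewrite ?mem_head.
Qed.

Lemma glue_orthonormal : orthonormal_fam ip glue.
Proof.
move=> i k; have [same | diff] := classic (blk i = blk k).
  by rewrite /glue -same; case: (blk i) => [j|]; [apply: Hh | apply: Hf].
have -> : (i == k) = false by apply/negP => /eqP ik; apply: diff; rewrite ik.
apply: (lspan_on_orthogonal Hip Hf _ (glue_lspan_on i) (glue_lspan_on k)).
move=> k' /glue_support_blk ki; apply/negP => /glue_support_blk kk.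
by apply: diff; rewrite -ki -kk.
Qed.

Lemma lspan_glue k : lspan f (glue k).
Proof. by exists (glue_support k); apply: glue_lspan_on. Qed.

Lemma lspan_f_glue i : lspan glue (f i).
Proof.
rewrite /lspan; case Ei: (blk i) => [j | ].
  exists (S j); apply: eq_lspan_on (proj2 ((bc j).2 i _)); last by apply/blkP.
  by move=> k /blkP Ek; rewrite /glue Ek.
exists [:: i]; rewrite -[f i]/(if None is Some j then h j i else f i) -Ei.
by apply: lspan_on_self; rewrite ?mem_head.
Qed.

End Gluing.

Theorem lemma2p4 (R : realType) (V : lmodType R[i]) (ip : V -> V -> R[i])
  (HV : is_hilbert ip)
  (D : V -> Prop) (E : V -> V) (HE : symmetric_operator ip D E)
  (I : countType) (J : Type) (Ij : J -> {fset I})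
  (d dt : I -> R)
  (Hdisj : forall (j k : J) (i : I), i \in Ij j -> i \in Ij k -> j = k)
  (Hmaj : forall j : J, majorized [seq d i | i <- Ij j] [seq dt i | i <- Ij j])
  (Hout : forall i : I, (forall j : J, i \notin Ij j) -> dt i = d i)
  (f : I -> V) (HfD : forall i : I, D (f i)) (Hf : orthonormal_fam ip f)
  (Hfd : forall i : I, ip (E (f i)) (f i) = (dt i)%:C) :
  exists e : I -> V,
    [/\ orthonormal_fam ip e,
        forall k : I, lspan f (e k),
        forall x : V, cspan ip e x <-> cspan ip f x
      & forall i : I, ip (E (e i)) (e i) = (d i)%:C].
Proof.
have [Hip _] := HV; case: HE => HD _ HElin HEsym.
have blocks j : exists h, [/\ basis_change_on (Ij j) f h, orthonormal_fam ip h,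
    forall i, D (h i) & forall i, i \in Ij j -> ip (E (h i)) (h i) = (d i)%:C].
  apply: (diagonal_majorized Hip HD HElin HEsym (fset_uniq _) Hf HfD).
    by move=> i _; apply: Hfd.
  exact: majorized_on_map.
have [H HH] := choice _ blocks.
pose S j : seq I := Ij j.
have [blk blkP] :=
  partial_fun_of_rel (P := fun i j => i \in S j) (fun i j k => Hdisj j k i).
have bc j : basis_change_on (S j) f (H j) by case: (HH j).
exists (glue blk f H); split.
- by apply: (glue_orthonormal Hip (S := S) blkP Hf) bc => j; case: (HH j).
- exact: (lspan_glue (S := S) blkP) bc.
- move=> x; split; apply: cspan_trans.
    exact: (lspan_glue (S := S) blkP) bc.
  exact: (lspan_f_glue (S := S) blkP) bc.
- move=> i; rewrite /glue; case Ei: (blk i) => [j | ].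
    by case: (HH j) => _ _ _; apply; apply/blkP.
  by rewrite Hfd Hout // => j; apply/negP => /blkP; rewrite Ei.
Qed.
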